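(* The categories $\mathbf{Norm}$, $\mathbf{Ban}$ and $\mathbf{OSp}$ have no non-zero regular projective objects.
   Context: The ground field is $\mathbb{R}$ or $\mathbb{C}$. $\mathbf{OSp}$ is the category of (not necessarily complete) operator spaces with completely contractive linear maps; $\mathbf{Norm}$ (resp. $\mathbf{Ban}$) is the category of normed (resp. Banach) spaces with contractive linear maps. A regular epimorphism is a morphism that is the coequalizer of some pair of parallel morphisms. An object $p$ is regular projective if for every regular epimorphism $x\to y$ and every morphism $p\to y$ there exists a morphism $p\to x$ whose composite with $x\to y$ is the given $p\to y$. *)

From HB Require Import structures.
From mathcomp Require Import all_boot all_order all_algebra.
From mathcomp Require Import reals.
From mathcomp Require Import complex.

Set Implicit Arguments.
Unset Strict Implicit.
Unset Printing Implicit Defensive.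

Import Order.TTheory GRing.Theory Num.Theory.
Local Open Scope ring_scope.

(* Generic notions for a concrete category whose objects carry a K-vector   *)
(* space, whose morphisms are the functions satisfying a predicate [isHom]   *)
(* (composition = composition of functions, identity = identity function), *)
(* and where two morphisms are equal iff they are pointwise equal.          *)
Section ConcreteCategory.
Variables (K : numFieldType) (Obj : Type) (car : Obj -> lmodType K).
Variable isHom : forall X Y : Obj, (car X -> car Y) -> Prop.

Definition is_coequalizer (X Y Z : Obj) (f g : car X -> car Y)
    (e : car Y -> car Z) : Prop :=
  isHom e /\ (forall x, e (f x) = e (g x)) /\
  forall (W : Obj) (h : car Y -> car W), isHom h ->
    (forall x, h (f x) = h (g x)) ->
    exists u : car Z -> car W,
      [/\ isHom u, (forall y, u (e y) = h y) &
          forall u' : car Z -> car W, isHom u' ->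
            (forall y, u' (e y) = h y) -> forall z, u' z = u z].

Definition is_regular_epi (Y Z : Obj) (e : car Y -> car Z) : Prop :=
  exists (X : Obj) (f g : car X -> car Y),
    [/\ isHom f, isHom g & is_coequalizer f g e].

Definition is_regular_projective (P : Obj) : Prop :=
  forall (X Y : Obj) (q : car X -> car Y), is_regular_epi q ->
  forall h : car P -> car Y, isHom h ->
  exists k : car P -> car X, isHom k /\ forall p, q (k p) = h p.

Definition nonzero_obj (P : Obj) : Prop := exists v : car P, v <> 0.

Definition no_nonzero_regular_projective : Prop :=
  forall P : Obj, nonzero_obj P -> ~ is_regular_projective P.

End ConcreteCategory.

Definition is_linear (K : numFieldType) (V W : lmodType K) (f : V -> W) :=
  forall (a : K) (x y : V), f (a *: x + y) = a *: f x + f y.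

(* Norm and Ban (norms take values in the scalar field K, as in MathComp;   *)
(* for K = R[i] they are nonnegative reals of R[i]).                         *)
Definition is_norm_sc (K : numFieldType) (V : zmodType) (sc : K -> V -> V)
    (nm : V -> K) :=
  [/\ forall x, 0 <= nm x,
      forall x, nm x = 0 -> x = 0,
      forall x y, nm (x + y) <= nm x + nm y &
      forall (a : K) x, nm (sc a x) = `|a| * nm x].

Definition is_norm (K : numFieldType) (V : lmodType K) (nm : V -> K) :=
  is_norm_sc ( *:%R ) nm.

Definition mx_scale (K : numFieldType) (V : lmodType K) n (a : K)
    (v : 'M[V]_n) : 'M[V]_n := map_mx (fun x => a *: x) v.

Record normed (K : numFieldType) := Normed {
  ncar :> lmodType K;
  nnorm : ncar -> K;
  nnorm_is_norm : is_norm nnorm }.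

Definition normed_hom (K : numFieldType) (X Y : normed K)
    (f : ncar X -> ncar Y) : Prop :=
  is_linear f /\ forall x, nnorm (f x) <= nnorm x.

Definition complete_normed (K : numFieldType) (X : normed K) : Prop :=
  forall u : nat -> ncar X,
    (forall e : K, 0 < e -> exists N, forall m n, (N <= m)%N -> (N <= n)%N ->
        nnorm (u m - u n) < e) ->
    exists l : ncar X, forall e : K, 0 < e -> exists N, forall n, (N <= n)%N ->
        nnorm (u n - l) < e.

Record banach (K : numFieldType) := Banach {
  bnormed : normed K;
  bcomplete : complete_normed bnormed }.

Definition banach_hom (K : numFieldType) (X Y : banach K)
    (f : ncar (bnormed X) -> ncar (bnormed Y)) : Prop :=
  normed_hom f.

(* OSp: abstract operator spaces (Ruan's axioms).                           *)
Definition sqnorm2 (K : numFieldType) n (x : 'cV[K]_n) : K :=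
  \sum_(i < n) `|x i 0| ^+ 2.

Definition contraction (K : numFieldType) m n (alpha : 'M[K]_(m, n)) : Prop :=
  forall x : 'cV[K]_n, sqnorm2 (alpha *m x) <= sqnorm2 x.

Definition smx_mul (K : numFieldType) (V : lmodType K) m n
    (alpha : 'M[K]_(m, n)) (v : 'M[V]_n) (beta : 'M[K]_(n, m)) : 'M[V]_m :=
  \matrix_(i, j) \sum_(k < n) \sum_(l < n) (alpha i k * beta l j) *: v k l.

Record ospace (K : numFieldType) := OSpace {
  ocar :> lmodType K;
  onorm : forall n, 'M[ocar]_n -> K;
  onorm_is_norm : forall n, is_norm_sc (@mx_scale K ocar n) (@onorm n);
  onorm_R1 : forall m n (v : 'M[ocar]_m) (w : 'M[ocar]_n),
      onorm (block_mx v 0 0 w) = Num.max (onorm v) (onorm w);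
  (* Ruan's axiom (R2), ||alpha v beta|| <= ||alpha|| ||v|| ||beta||,
     stated for contractive scalar matrices (equivalent by homogeneity) *)
  onorm_R2 : forall m n (alpha : 'M[K]_(m, n)) (v : 'M[ocar]_n)
      (beta : 'M[K]_(n, m)),
      contraction alpha -> contraction beta ->
      onorm (smx_mul alpha v beta) <= onorm v }.

Definition ospace_hom (K : numFieldType) (X Y : ospace K)
    (f : ocar X -> ocar Y) : Prop :=
  is_linear f /\ forall n (v : 'M[ocar X]_n), onorm (map_mx f v) <= onorm v.

Definition claim (K : numFieldType) : Prop :=
  [/\ @no_nonzero_regular_projective K (normed K) (@ncar K) (@normed_hom K),
      @no_nonzero_regular_projective K (banach K)
        (fun X : banach K => ncar (bnormed X)) (@banach_hom K) &
      @no_nonzero_regular_projective K (ospace K) (@ocar K) (@ospace_hom K)].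

From HB Require Import structures.
From mathcomp Require Import all_boot all_order all_algebra.
From mathcomp Require Import boolp classical_sets functions reals complex ring.

Set Implicit Arguments.
Unset Strict Implicit.
Unset Printing Implicit Defensive.

Import Order.TTheory GRing.Theory Num.Theory.
Local Open Scope ring_scope.

(* Given a nonzero object P, let X be the space of null sequences in P
   (finitely supported ones for operator spaces), normed at each matrix level
   by sup_k max (||x_k||, ||x_0 + (x_0 - x_k)/(k+1)||).  The head map
   q : X -> P, x |-> x_0, has the linear section s y = (y, 0, 0, ...), and q
   is the coequalizer of x |-> x/2 and x |-> s (q x)/2: a morphism h equalizing
   them satisfies h = h o s o q, and h o s is contractive because
   h (s y) = h (y, ..., y, 0, ...) while the constant sequence of length n+1
   has norm at most (1 + 1/(n+1)) ||y||.  Yet q splits by no contraction k: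
   some coordinate of k y is shorter than y = (k y)_0, which makes the skew
   term x_0 + (x_0 - x_k)/(k+1) strictly longer than y.  The only property
   of the scalars used is that bounded nonnegative sequences have suprema,
   which holds in R and in R[i]. *)

Definition is_lub_seq (K : numFieldType) (s : nat -> K) (l : K) : Prop :=
  (forall n, s n <= l) /\ (forall b, (forall n, s n <= b) -> l <= b).

Definition nonneg_lub_property (K : numFieldType) : Prop :=
  forall s : nat -> K, (forall n, 0 <= s n) -> (exists B, forall n, s n <= B) ->
  exists l, is_lub_seq s l.

Lemma real_nonneg_lub (R : realType) : nonneg_lub_property R.
Proof.
move=> s _ [B sB].
have range_s0 : (range s !=set0)%classic by exists (s 0%N), 0%N.
exists (sup (range s)); split => [n | b sb].
  by apply: sup_upper_bound; [split=> //; exists B => _ [k _ <-] | exists n].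
by apply: ge_sup => // _ [n _ <-].
Qed.

Local Open Scope complex_scope.

Lemma complex_nonneg_lub (R : realType) : nonneg_lub_property R[i].
Proof.
move=> s s_ge0 [B sB].
have sRe n : s n = (complex.Re (s n))%:C by rewrite RRe_real // ger0_real.
have leRe (b : R[i]) n : s n <= b -> complex.Re (s n) <= complex.Re b.
  by rewrite lecE => /andP[].
have Re_ge0 n : 0 <= complex.Re (s n) by rewrite -lecR -sRe.
have Re_bounded : exists B, forall n, complex.Re (s n) <= B.
  by exists (complex.Re B) => n; apply: leRe.
have [l [l_ub l_least]] := real_nonneg_lub Re_ge0 Re_bounded.
exists l%:C; split => [n | b sb]; first by rewrite sRe lecR.
have /eqP b_real : complex.Im b == 0.
  by have := sb 0%N; rewrite sRe lecE => /andP[/eqP ->].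
by rewrite lecE /= b_real eqxx l_least // => n; apply: leRe.
Qed.
Local Close Scope complex_scope.

Lemma ge0_ge_max (K : numFieldType) (x y z : K) : 0 <= x -> 0 <= y ->
  (Num.max x y <= z) = (x <= z) && (y <= z).
Proof.
by move=> x_ge0 y_ge0; rewrite comparable_ge_max // real_comparable ?ger0_real.
Qed.

Lemma ge0_le_max (K : numFieldType) (x y : K) : 0 <= x -> 0 <= y ->
  x <= Num.max x y /\ y <= Num.max x y.
Proof. by move=> x_ge0 y_ge0; apply/andP; rewrite -ge0_ge_max. Qed.

Section SupSeq.
Variables (K : numFieldType) (lubK : nonneg_lub_property K).

Definition sup_seq (s : nat -> K) : K := xget 0 (is_lub_seq s).

Section Nonneg.
Variables (s : nat -> K) (B : K).
Hypotheses (s_ge0 : forall n, 0 <= s n) (s_le : forall n, s n <= B).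

Lemma sup_seqP : is_lub_seq s (sup_seq s).
Proof. by apply: xgetPex; apply: lubK => //; exists B. Qed.

Lemma sup_seq_ub n : s n <= sup_seq s.
Proof. by have [] := sup_seqP. Qed.

Lemma sup_seq_ge0 : 0 <= sup_seq s.
Proof. exact: le_trans (s_ge0 0%N) (sup_seq_ub 0%N). Qed.

End Nonneg.

Lemma sup_seq_le (s : nat -> K) b :
  (forall n, 0 <= s n) -> (forall n, s n <= b) -> sup_seq s <= b.
Proof. by move=> s_ge0 s_le; have [_] := sup_seqP s_ge0 s_le; apply. Qed.

Lemma sup_seq_max (s t : nat -> K) (B : K) :
  (forall n, 0 <= s n) -> (forall n, 0 <= t n) ->
  (forall n, s n <= B) -> (forall n, t n <= B) ->
  sup_seq (fun n => Num.max (s n) (t n)) = Num.max (sup_seq s) (sup_seq t).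
Proof.
move=> s_ge0 t_ge0 s_le t_le.
have sup_s_ge0 := sup_seq_ge0 s_ge0 s_le; have sup_t_ge0 := sup_seq_ge0 t_ge0 t_le.
have [sup_s_le sup_t_le] := ge0_le_max sup_s_ge0 sup_t_ge0.
have st_max n := ge0_le_max (s_ge0 n) (t_ge0 n).
have st_ge0 n : 0 <= Num.max (s n) (t n) := le_trans (s_ge0 n) (st_max n).1.
have st_le n : Num.max (s n) (t n) <= B by rewrite ge0_ge_max ?s_le ?t_le.
apply/le_anti/andP; split.
  apply: sup_seq_le => // n; rewrite ge0_ge_max //.
  by rewrite (le_trans (sup_seq_ub s_ge0 s_le n)) ?(le_trans (sup_seq_ub t_ge0 t_le n)).
rewrite ge0_ge_max //; apply/andP; split; apply: sup_seq_le => // n.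
  exact: le_trans (st_max n).1 (sup_seq_ub st_ge0 st_le n).
exact: le_trans (st_max n).2 (sup_seq_ub st_ge0 st_le n).
Qed.

Lemma sup_seqZ (s : nat -> K) (B r : K) :
  (forall n, 0 <= s n) -> (forall n, s n <= B) -> 0 <= r ->
  sup_seq (fun n => r * s n) = r * sup_seq s.
Proof.
move=> s_ge0 s_le r_ge0.
have rs_ge0 n : 0 <= r * s n by rewrite mulr_ge0.
have rs_le n : r * s n <= r * B by rewrite ler_wpM2l.
have [r0|r_neq0] := eqVneq r 0.
  subst r; rewrite mul0r; apply/le_anti/andP; split; last exact: sup_seq_ge0 rs_ge0 rs_le.
  by apply: sup_seq_le => // n; rewrite mul0r.
have r_gt0 : 0 < r by rewrite lt_def r_neq0.
apply/le_anti/andP; split.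
  by apply: sup_seq_le => // n; rewrite ler_wpM2l // (sup_seq_ub s_ge0 s_le).
rewrite -ler_pdivlMl //; apply: sup_seq_le => // n.
by rewrite ler_pdivlMl // (sup_seq_ub rs_ge0 rs_le).
Qed.

Lemma lub_archi (r : K) : 0 <= r -> exists n : nat, r <= n%:R.
Proof.
move=> r_ge0; apply: contrapT => no_bound.
have nat_le n : n%:R <= r.
  have /orP[|//] := real_leVge (ger0_real r_ge0) (ger0_real (ler0n K n)).
  by move=> rn; case: no_bound; exists n.
have [l_ub l_least] := sup_seqP (fun n => ler0n K n) nat_le.
have : sup_seq (fun n => n%:R) <= sup_seq (fun n => n%:R) - 1.
  by apply: l_least => n; rewrite lerBrDr natr1 l_ub.
by rewrite -subr_ge0 addrAC subrr add0r oppr_ge0 ler10.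
Qed.

Lemma le_of_forall_le_1Dinv (a b : K) : 0 <= b ->
  (forall n : nat, a <= (1 + n.+1%:R^-1) * b) -> a <= b.
Proof.
move=> b_ge0 ab; apply/ler_addgt0Pr => e e_gt0.
have [n bn] := lub_archi (divr_ge0 b_ge0 (ltW e_gt0)).
apply: le_trans (ab n) _; rewrite mulrDl mul1r lerD2l mulrC ler_pdivrMr ?ltr0n //.
by rewrite -ler_pdivrMl // mulrC (le_trans bn) // ler_nat.
Qed.

End SupSeq.

Section IsLinear.
Variables (K : numFieldType) (U V : lmodType K) (f : U -> V).
Hypothesis f_lin : is_linear f.

Lemma is_linear0 : f 0 = 0.
Proof. by have := f_lin (-1) 0 0; rewrite scaler0 addr0 scaleN1r addNr. Qed.

Lemma is_linearZ a x : f (a *: x) = a *: f x.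
Proof. by have := f_lin a x 0; rewrite is_linear0 !addr0. Qed.

Lemma is_linearD x y : f (x + y) = f x + f y.
Proof. by have := f_lin 1 x y; rewrite !scale1r. Qed.

Lemma is_linear_sum I (r : seq I) (P : pred I) (F : I -> U) :
  f (\sum_(i <- r | P i) F i) = \sum_(i <- r | P i) f (F i).
Proof. exact: (big_morph f is_linearD is_linear0). Qed.

End IsLinear.

Lemma is_linear_comp (K : numFieldType) (U V W : lmodType K)
    (f : U -> V) (g : V -> W) :
  is_linear f -> is_linear g -> is_linear (g \o f).
Proof. by move=> f_lin g_lin a x y /=; rewrite f_lin g_lin. Qed.

Lemma is_linear_scale (K : numFieldType) (V : lmodType K) (a : K) :
  is_linear ( *:%R a : V -> V).
Proof. by move=> b x y; rewrite scalerDr !scalerA mulrC. Qed.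

Section NormTheory.
Variables (K : numFieldType) (V : lmodType K) (p : V -> K).
Hypothesis p_norm : is_norm p.

Lemma nm_ge0 x : 0 <= p x.
Proof. by have [] := p_norm. Qed.

Lemma nm_eq0 x : p x = 0 -> x = 0.
Proof. by have [_ + _ _] := p_norm; apply. Qed.

Lemma ler_nmD x y : p (x + y) <= p x + p y.
Proof. by have [_ _ + _] := p_norm; apply. Qed.

Lemma nmZ a x : p (a *: x) = `|a| * p x.
Proof. by have [_ _ _] := p_norm; apply. Qed.

Lemma nm0 : p 0 = 0.
Proof. by rewrite -(scale0r 0) nmZ normr0 mul0r. Qed.

Lemma nmN x : p (- x) = p x.
Proof. by rewrite -scaleN1r nmZ normrN normr1 mul1r. Qed.

Lemma ler_nmB x y : p (x - y) <= p x + p y.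
Proof. by rewrite -(nmN y) ler_nmD. Qed.

Lemma nm_gt0 x : x != 0 -> 0 < p x.
Proof.
by move=> x_neq0; rewrite lt_def nm_ge0 andbT; apply: contra_neq x_neq0 => /nm_eq0.
Qed.

Lemma nm_half_le x : p (2%:R^-1 *: x) <= p x.
Proof.
rewrite nmZ ger0_norm ?invr_ge0 ?ler0n // ler_piMl ?nm_ge0 //.
by rewrite invf_le1 ?ltr0n ?ler1n.
Qed.

End NormTheory.

Section Probe.
Variables (K : numFieldType) (V : lmodType K).

Definition probe (z : nat -> V) (j : nat) : V :=
  if odd j then z 0%N + j./2.+1%:R^-1 *: (z 0%N - z j./2) else z j./2.

Lemma probe_even z k : probe z k.*2 = z k.
Proof. by rewrite /probe odd_double doubleK. Qed.

Lemma probe_odd z k : probe z k.*2.+1 = z 0%N + k.+1%:R^-1 *: (z 0%N - z k).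
Proof. by rewrite /probe /= odd_double /= uphalf_double. Qed.

Lemma probe_linear j : is_linear (probe^~ j).
Proof.
move=> a z z'; have zE k : (a *: z + z') k = a *: z k + z' k by [].
rewrite /probe !zE; case: odd => //.
by rewrite opprD addrACA -scalerBr scalerDr scalerA mulrC -scalerA scalerDr addrACA
  [in RHS]scalerDr.
Qed.

Definition const_upto (y : V) (n : nat) : nat -> V :=
  fun k => if (k <= n)%N then y else 0.

Lemma const_upto_linear n : is_linear (const_upto^~ n).
Proof.
move=> a y y'; apply/funext => k.
change (const_upto (a *: y + y') n k = a *: const_upto y n k + const_upto y' n k).
by rewrite /const_upto; case: leqP => _ //; rewrite scaler0 addr0.
Qed.

Variables (p : V -> K) (p_norm : is_norm p).

Lemma nm_probe_le z j : p (probe z j) <= 2%:R * p (z 0%N) + p (z j./2).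
Proof.
rewrite /probe; case: odd; last by rewrite lerDr mulr_ge0 ?ler0n ?nm_ge0.
have w_gt0 : 0 < j./2.+1%:R^-1 :> K by rewrite invr_gt0 ltr0n.
have w_le1 : j./2.+1%:R^-1 <= 1 :> K by rewrite invf_le1 ?ltr0n // ler1n.
apply: le_trans (ler_nmD p_norm _ _) _.
rewrite nmZ // (ger0_norm (ltW w_gt0)) mulr2n mulrDl mul1r -addrA lerD2l.
apply: le_trans (ler_wpM2l (ltW w_gt0) (ler_nmB p_norm _ _)) _.
by rewrite ler_piMl ?addr_ge0 ?nm_ge0.
Qed.

Lemma nm_probe_const_upto y n j :
  p (probe (const_upto y n) j) <= (1 + n.+1%:R^-1) * p y.
Proof.
have w_gt0 k : 0 < k.+1%:R^-1 :> K by rewrite invr_gt0 ltr0n.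
have le_y : p y <= (1 + n.+1%:R^-1) * p y by rewrite ler_peMl ?nm_ge0 // lerDl ltW.
rewrite /probe /const_upto /=; case: odd; last first.
  by case: leqP => _ //; rewrite nm0 // (le_trans (nm_ge0 p_norm y)).
case: leqP => [_|n_lt]; first by rewrite subrr scaler0 addr0.
rewrite subr0 -{1}[y]scale1r -scalerDl nmZ // ger0_norm ?addr_ge0 ?(ltW (w_gt0 _)) //.
by rewrite ler_wpM2r ?nm_ge0 // lerD2l lef_pV2 ?posrE ?ltr0n // ler_nat ltnS ltnW.
Qed.

Lemma nm_probe_gap z k : p (z k) < p (z 0%N) -> p (z 0%N) < p (probe z k.*2.+1).
Proof.
move=> zk_lt; rewrite probe_odd; set w := k.+1%:R^-1 : K.
have w_gt0 : 0 < w by rewrite invr_gt0 ltr0n.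
have split_z0 : (1 + w) *: z 0%N = (z 0%N + w *: (z 0%N - z k)) + w *: z k.
  by rewrite scalerDl scale1r scalerBr -addrA subrK.
have := ler_nmD p_norm (z 0%N + w *: (z 0%N - z k)) (w *: z k).
rewrite -split_z0 !nmZ // !ger0_norm ?addr_ge0 ?(ltW w_gt0) // mulrDl mul1r => le_z0.
rewrite -(ltrD2r (w * p (z 0%N))); apply: le_lt_trans le_z0 _.
by rewrite ltrD2l ltr_pM2l.
Qed.

End Probe.

Section ProbeNorm.
Variables (K : numFieldType) (lubK : nonneg_lub_property K).
Variables (V S : lmodType K) (p : V -> K) (c : S -> nat -> V).
Hypotheses (p_norm : is_norm p) (c_lin : is_linear c).
Hypothesis c_inj : forall x, c x = 0 -> x = 0.
Hypothesis c_bounded : forall x, exists B, forall k, p (c x k) <= B.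

Definition probe_norm (x : S) : K := sup_seq (fun j => p (probe (c x) j)).

Lemma probe_nm_ge0 x j : 0 <= p (probe (c x) j).
Proof. exact: nm_ge0. Qed.

Lemma probe_nm_bounded x : exists B, forall j, p (probe (c x) j) <= B.
Proof.
have [B cB] := c_bounded x; exists (2%:R * B + B) => j.
by apply: le_trans (nm_probe_le p_norm _ _) _; rewrite lerD ?ler_wpM2l ?ler0n.
Qed.

Lemma probe_norm_ub x j : p (probe (c x) j) <= probe_norm x.
Proof.
have [B probeB] := probe_nm_bounded x.
by rewrite /probe_norm (sup_seq_ub lubK (probe_nm_ge0 x) probeB).
Qed.

Lemma probe_norm_le x b : (forall j, p (probe (c x) j) <= b) -> probe_norm x <= b.
Proof. exact: (sup_seq_le lubK (probe_nm_ge0 x)). Qed.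

Lemma coord_le_probe_norm x k : p (c x k) <= probe_norm x.
Proof. by rewrite -probe_even probe_norm_ub. Qed.

Lemma probe_norm_const_upto x y n : c x = const_upto y n ->
  probe_norm x <= (1 + n.+1%:R^-1) * p y.
Proof. by move=> cx; apply: probe_norm_le => j; rewrite cx nm_probe_const_upto. Qed.

Lemma probe_norm_gap x k : p (c x k) < p (c x 0%N) -> p (c x 0%N) < probe_norm x.
Proof. by move=> /(nm_probe_gap p_norm) /lt_le_trans; apply; apply: probe_norm_ub. Qed.

Lemma probe_c_linear j : is_linear (fun x => probe (c x) j).
Proof. exact: (is_linear_comp c_lin (probe_linear j)). Qed.

Lemma probe_norm_is_norm : is_norm probe_norm.
Proof.
split=> [x | x | x y | a x].
- have [B probeB] := probe_nm_bounded x.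
  exact: (sup_seq_ge0 lubK (probe_nm_ge0 x) probeB).
- move=> x0; apply: c_inj; apply/funext => k /=; apply: (nm_eq0 p_norm).
  by apply/le_anti; rewrite nm_ge0 // -x0 coord_le_probe_norm.
- apply: probe_norm_le => j; rewrite (is_linearD (probe_c_linear j)).
  by apply: le_trans (ler_nmD p_norm _ _) _; rewrite lerD ?probe_norm_ub.
- have [B probeB] := probe_nm_bounded x.
  rewrite -(sup_seqZ lubK (probe_nm_ge0 x) probeB) ?normr_ge0 //; congr sup_seq.
  by apply/funext => j; rewrite (is_linearZ (probe_c_linear j)) nmZ.
Qed.

End ProbeNorm.

Section SplitQuotient.
Variables (K : numFieldType) (Obj : Type) (car : Obj -> lmodType K).
Variable isHom : forall X Y : Obj, (car X -> car Y) -> Prop.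
Hypothesis hom_linear : forall X Y (f : car X -> car Y), isHom f -> is_linear f.
Variables (X P : Obj) (q : car X -> car P) (s : car P -> car X).
Hypotheses (q_hom : isHom q) (qsK : cancel s q).
Hypotheses (half_hom : isHom (fun x : car X => 2%:R^-1 *: x))
  (half_sq_hom : isHom (fun x : car X => 2%:R^-1 *: s (q x))).
Hypothesis comp_s_hom : forall (W : Obj) (h : car X -> car W), isHom h ->
  (forall x, h x = h (s (q x))) -> isHom (h \o s).

Lemma split_quotient_regular_epi : is_regular_epi isHom q.
Proof.
exists X, (fun x => 2%:R^-1 *: x), (fun x => 2%:R^-1 *: s (q x)).
split=> //; split=> //; split=> [x | W h h_hom h_half].
  by rewrite !(is_linearZ (hom_linear q_hom)) qsK.
have hsq x : h x = h (s (q x)).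
  apply: (@scalerI _ _ 2%:R^-1); first by rewrite invr_eq0 pnatr_eq0.
  by rewrite -!(is_linearZ (hom_linear h_hom)).
exists (h \o s); split=> [|y|u' _ u'q z]; first exact: comp_s_hom.
  by rewrite /= -hsq.
by rewrite -[z]qsK u'q /= qsK.
Qed.

Lemma split_quotient_not_regular_projective :
  isHom (@id (car P)) -> (forall k : car P -> car X, isHom k -> ~ cancel k q) ->
  ~ is_regular_projective isHom P.
Proof.
move=> id_hom no_section proj_P.
have [k [k_hom qkK]] := proj_P _ _ _ split_quotient_regular_epi id id_hom.
exact: no_section k_hom qkK.
Qed.

End SplitQuotient.

Lemma bounded_of_eventually_bounded (K : numFieldType) (s : nat -> K) (b : K) N :
  (forall n, 0 <= s n) -> (forall n, (N <= n)%N -> s n <= b) ->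
  exists B, forall n, s n <= B.
Proof.
move=> s_ge0 s_le; have b_ge0 : 0 <= b := le_trans (s_ge0 N) (s_le N (leqnn N)).
exists (b + \sum_(i < N) s i) => n; have [/s_le sn_le|n_lt] := leqP N n.
  by rewrite (le_trans sn_le) // lerDl sumr_ge0.
by rewrite (bigD1 (Ordinal n_lt)) //= addrCA lerDl addr_ge0 ?sumr_ge0.
Qed.

Section NullSeq.
Variables (K : numFieldType) (P : normed K).
Local Notation p := (@nnorm K P).
Let p_norm : is_norm p := nnorm_is_norm P.

Definition null_seq : {pred nat -> P} := fun z =>
  `[< forall e, 0 < e -> exists N, forall k, (N <= k)%N -> p (z k) < e >].

Lemma null_seqP (z : nat -> P) : reflect
  (forall e, 0 < e -> exists N, forall k, (N <= k)%N -> p (z k) < e) (z \in null_seq).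
Proof. exact: asboolP. Qed.

Lemma null_seq_submod_closed : GRing.submod_closed null_seq.
Proof.
split=> [|a z z' /null_seqP z_null /null_seqP z'_null].
  by apply/null_seqP => e e_gt0; exists 0%N => k _; rewrite nm0.
apply/null_seqP => e e_gt0.
have e2_gt0 : 0 < e / 2%:R by rewrite divr_gt0 ?ltr0n.
have [N' z'_small] := z'_null _ e2_gt0.
have [N z_small] : exists N, forall k, (N <= k)%N -> p (a *: z k) < e / 2%:R.
  have [->|a_neq0] := eqVneq a 0; first by exists 0%N => k _; rewrite scale0r nm0.
  have a_gt0 : 0 < `|a| by rewrite normr_gt0.
  have [N zN] := z_null _ (divr_gt0 e2_gt0 a_gt0).
  by exists N => k kN; rewrite nmZ // mulrC -ltr_pdivlMr // zN.
exists (maxn N N') => k; rewrite geq_max => /andP[kN kN'].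
apply: le_lt_trans (ler_nmD p_norm _ _) _.
by rewrite [e]splitr ltrD ?z_small ?z'_small.
Qed.

HB.instance Definition _ :=
  GRing.isSubmodClosed.Build K (nat -> P) null_seq null_seq_submod_closed.

Record c0 := C0 { c0_val : nat -> P; _ : c0_val \in null_seq }.

HB.instance Definition _ := [isSub for c0_val].
HB.instance Definition _ := [Choice of c0 by <:].
HB.instance Definition _ := [SubChoice_isSubLmodule of c0 by <:].

Lemma c0_val_linear : is_linear c0_val.
Proof. by []. Qed.

Lemma const_upto_null y n : const_upto y n \in null_seq.
Proof.
apply/null_seqP => e e_gt0; exists n.+1 => k n_lt.
by rewrite /const_upto leqNgt n_lt nm0.
Qed.

Definition c0_const (y : P) n : c0 := C0 (const_upto_null y n).

Lemma c0_bounded (x : c0) : exists B, forall k, p (c0_val x k) <= B.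
Proof.
have [N xN] := (null_seqP _ (valP x)) 1 ltr01.
apply: (bounded_of_eventually_bounded (b := 1) (N := N)) => k; first exact: nm_ge0.
by move/xN/ltW.
Qed.

End NullSeq.

Arguments null_seq {K P}.
Arguments c0_val {K P}.

Section C0Normed.
Variables (K : numFieldType) (lubK : nonneg_lub_property K) (P : normed K).
Local Notation p := (@nnorm K P).
Let p_norm : is_norm p := nnorm_is_norm P.

Lemma c0_val_eq0 (x : c0 P) : c0_val x = 0 -> x = 0.
Proof. by move=> x0; apply: val_inj. Qed.

Definition c0_norm : c0 P -> K := probe_norm p c0_val.

Lemma c0_norm_is_norm : is_norm c0_norm.
Proof.
apply: (probe_norm_is_norm lubK p_norm (c0_val_linear (P:=P)) c0_val_eq0).
exact: c0_bounded.
Qed.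

Definition c0_normed : normed K := Normed c0_norm_is_norm.

Definition c0_head (x : c0 P) : P := c0_val x 0%N.

Lemma c0_const_linear n : is_linear (fun y : P => c0_const y n).
Proof. by move=> a y y'; apply: val_inj; apply: const_upto_linear. Qed.

Lemma c0_head_hom : normed_hom (X := c0_normed) (Y := P) c0_head.
Proof.
split=> [a x y | x] //.
exact: (coord_le_probe_norm lubK p_norm (c0_bounded (P:=P))).
Qed.

Lemma c0_half_hom : normed_hom (X := c0_normed) (Y := c0_normed) ( *:%R 2%:R^-1).
Proof. by split; [apply: is_linear_scale | apply: nm_half_le c0_norm_is_norm]. Qed.

Lemma c0_norm_ub x j : p (probe (c0_val x) j) <= c0_norm x.
Proof. exact: (probe_norm_ub lubK p_norm (c0_bounded (P:=P))). Qed.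

Lemma c0_norm_le x b : (forall j, p (probe (c0_val x) j) <= b) -> c0_norm x <= b.
Proof. exact: (probe_norm_le lubK). Qed.

Lemma c0_norm_const y n : c0_norm (c0_const y n) <= (1 + n.+1%:R^-1) * p y.
Proof. exact: (probe_norm_const_upto lubK p_norm). Qed.

Lemma c0_half_const_hom : normed_hom (X := c0_normed) (Y := c0_normed)
  (fun x => 2%:R^-1 *: c0_const (c0_head x) 0).
Proof.
split=> [a x y | x /=].
  by rewrite [c0_head _]/= c0_const_linear is_linear_scale.
apply: le_trans (c0_norm_ub x 0); rewrite (nmZ c0_norm_is_norm).
rewrite ger0_norm ?invr_ge0 ?ler0n // ler_pdivrMl ?ltr0n //.
by apply: le_trans (c0_norm_const _ _) _; rewrite invr1.
Qed.

Lemma c0_const_comp_hom (W : normed K) (h : c0 P -> W) :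
  normed_hom (X := c0_normed) h -> (forall x, h x = h (c0_const (c0_head x) 0)) ->
  normed_hom (X := P) (fun y => h (c0_const y 0)).
Proof.
move=> [h_lin h_le] h_head; split=> [|y].
  exact: is_linear_comp (c0_const_linear 0) h_lin.
apply: (le_of_forall_le_1Dinv lubK (nm_ge0 p_norm y)) => n.
by rewrite -[c0_const y 0]/(c0_const (c0_head (c0_const y n)) 0) -h_head
  (le_trans (h_le _)) ?c0_norm_const.
Qed.

Lemma c0_no_section (k : P -> c0 P) (y : P) : y != 0 ->
  normed_hom (Y := c0_normed) k -> ~ cancel k c0_head.
Proof.
move=> y_neq0 [_ k_le] kK.
have [N kyN] := (null_seqP _ (valP (k y))) _ (nm_gt0 p_norm y_neq0).
have := probe_norm_gap lubK p_norm (c0_bounded (P:=P)) (x := k y) (k := N).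
rewrite -/(c0_head (k y)) kK => /(_ (kyN N (leqnn N))) /lt_le_trans /(_ (k_le y)).
by rewrite ltxx.
Qed.

End C0Normed.

Section C0Complete.
Variables (K : numFieldType) (lubK : nonneg_lub_property K) (P : normed K).
Local Notation p := (@nnorm K P).
Let p_norm : is_norm p := nnorm_is_norm P.

Variable u : nat -> c0 P.
Hypothesis u_cauchy : forall e, 0 < e -> exists N, forall m n,
  (N <= m)%N -> (N <= n)%N -> c0_norm (u m - u n) < e.

Lemma c0_cauchy_coord k : forall e, 0 < e -> exists N, forall m n,
  (N <= m)%N -> (N <= n)%N -> p (c0_val (u m) k - c0_val (u n) k) < e.
Proof.
move=> e /u_cauchy [N uN]; exists N => m n mN nN.
have := c0_norm_ub lubK (u m - u n) k.*2.
by rewrite probe_even => /le_lt_trans; apply; apply: uN.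
Qed.

Variable l : nat -> P.
Hypothesis l_lim : forall k e, 0 < e -> exists N, forall n,
  (N <= n)%N -> p (c0_val (u n) k - l k) < e.

Lemma c0_cauchy_unif e : 0 < e -> exists M, forall m, (M <= m)%N ->
  forall j, p (probe (c0_val (u m) - l) j) <= e.
Proof.
move=> /u_cauchy [M uM]; exists M => m mM j; apply/ler_addgt0Pr => d d_gt0.
have d3_gt0 : 0 < d / 3%:R by rewrite divr_gt0 ?ltr0n.
have [N0 uN0] := l_lim 0%N d3_gt0; have [N1 uN1] := l_lim j./2 d3_gt0.
pose n := maxn M (maxn N0 N1).
have [nM nN0 nN1] : [/\ (M <= n)%N, (N0 <= n)%N & (N1 <= n)%N].
  by rewrite !leq_max !leqnn !orbT.
have -> : c0_val (u m) - l = c0_val (u m - u n) + (c0_val (u n) - l).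
  by rewrite addrA subrK.
rewrite (is_linearD (probe_linear j)); apply: le_trans (ler_nmD p_norm _ _) _.
apply: lerD; first exact: ltW (le_lt_trans (c0_norm_ub lubK _ j) (uM m n mM nM)).
apply: le_trans (nm_probe_le p_norm _ _) _.
have -> : d = 2%:R * (d / 3%:R) + d / 3%:R by field.
by rewrite lerD ?ler_wpM2l ?ler0n // ltW ?uN0 ?uN1.
Qed.

Lemma c0_cauchy_lim_null : l \in null_seq.
Proof.
apply/null_seqP => e e_gt0; have e2_gt0 : 0 < e / 2%:R by rewrite divr_gt0 ?ltr0n.
have [M uM] := c0_cauchy_unif e2_gt0.
have [N uMN] := (null_seqP _ (valP (u M))) _ e2_gt0; exists N => k kN.
have -> : l k = c0_val (u M) k - (c0_val (u M) k - l k) by rewrite subKr.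
apply: le_lt_trans (ler_nmB p_norm _ _) _; rewrite [e]splitr ltr_leD ?uMN //.
by have := uM M (leqnn M) k.*2; rewrite probe_even.
Qed.

End C0Complete.

Lemma c0_complete (K : numFieldType) (lubK : nonneg_lub_property K) (P : normed K) :
  complete_normed P -> complete_normed (c0_normed lubK P).
Proof.
move=> P_complete u u_cauchy.
have [l l_lim] := choice (fun k => P_complete _ (c0_cauchy_coord lubK u_cauchy k)).
pose x := C0 (c0_cauchy_lim_null lubK u_cauchy l_lim); exists x => e e_gt0.
have [M uM] := c0_cauchy_unif lubK u_cauchy l_lim (e := e / 2%:R)
  (divr_gt0 e_gt0 (ltr0n _ 2)).
exists M => n nM; apply: le_lt_trans (c0_norm_le lubK (x := u n - x) (uM n nM)) _.
by rewrite ltr_pdivrMr ?ltr0n // ltr_pMr // ltr1n.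
Qed.

Section FinSupp.
Variables (K : numFieldType) (V : lmodType K).

Definition fin_supp : {pred nat -> V} :=
  fun z => `[< exists N, forall k, (N <= k)%N -> z k = 0 >].

Lemma fin_suppP (z : nat -> V) :
  reflect (exists N, forall k, (N <= k)%N -> z k = 0) (z \in fin_supp).
Proof. exact: asboolP. Qed.

Lemma fin_supp_submod_closed : GRing.submod_closed fin_supp.
Proof.
split=> [|a z z' /fin_suppP[N zN] /fin_suppP[N' z'N]]; apply/fin_suppP.
  by exists 0%N.
exists (maxn N N') => k; rewrite geq_max => /andP[kN kN'].
by change (a *: z k + z' k = 0); rewrite zN // z'N // scaler0 addr0.
Qed.

HB.instance Definition _ :=
  GRing.isSubmodClosed.Build K (nat -> V) fin_supp fin_supp_submod_closed.

Record fsseq := FSSeq { fs_val : nat -> V; _ : fs_val \in fin_supp }.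

HB.instance Definition _ := [isSub for fs_val].
HB.instance Definition _ := [Choice of fsseq by <:].
HB.instance Definition _ := [SubChoice_isSubLmodule of fsseq by <:].

Lemma const_upto_fin_supp y n : const_upto y n \in fin_supp.
Proof. by apply/fin_suppP; exists n.+1 => k n_lt; rewrite /const_upto leqNgt n_lt. Qed.

Definition fs_const (y : V) n : fsseq := FSSeq (const_upto_fin_supp y n).

Definition fs_supp (x : fsseq) : nat :=
  xget 0%N (fun N => forall k, (N <= k)%N -> fs_val x k = 0).

Lemma fs_suppP (x : fsseq) k : (fs_supp x <= k)%N -> fs_val x k = 0.
Proof.
have : exists N, forall k, (N <= k)%N -> fs_val x k = 0 by apply/fin_suppP/valP.
by move/(xgetPex 0%N); apply.
Qed.

End FinSupp.

Arguments fin_supp {K V}.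
Arguments fs_val {K V}.

(* 'M[V]_(m, n) is a K-module only through the alias mxlmod, since the
   canonical module structure of matrices is reserved for ring entries; its
   scaling is the entrywise mx_scale of the operator-space axioms. *)
Section MatrixLmodule.
Variables (K : numFieldType) (V : lmodType K) (m n : nat).

Definition mxlmod := 'M[V]_(m, n).
HB.instance Definition _ := GRing.Zmodule.on mxlmod.

Definition mx_scaler (a : K) (v : mxlmod) : mxlmod := map_mx ( *:%R a) v.

Fact mx_scalerA a b v : mx_scaler a (mx_scaler b v) = mx_scaler (a * b) v.
Proof. by apply/matrixP => i j; rewrite !mxE scalerA. Qed.
Fact mx_scale1r : left_id 1 mx_scaler.
Proof. by move=> v; apply/matrixP => i j; rewrite !mxE scale1r. Qed.
Fact mx_scalerDr : right_distributive mx_scaler +%R.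
Proof. by move=> a v w; apply/matrixP => i j; rewrite !mxE scalerDr. Qed.
Fact mx_scalerDl v : {morph mx_scaler^~ v : a b / a + b}.
Proof. by move=> a b; apply/matrixP => i j; rewrite !mxE scalerDl. Qed.

HB.instance Definition _ := GRing.Zmodule_isLmodule.Build K mxlmod
  mx_scalerA mx_scale1r mx_scalerDr mx_scalerDl.

End MatrixLmodule.

Lemma onorm_is_norm_mxlmod (K : numFieldType) (P : ospace K) n :
  @is_norm K (mxlmod (ocar P) n n) (@onorm K P n).
Proof. exact: onorm_is_norm. Qed.

Section FinSuppOSpace.
Variables (K : numFieldType) (lubK : nonneg_lub_property K) (P : ospace K).
Local Notation V := (ocar P).
Local Notation X := (fsseq V).

Section Level.
Variable n : nat.
Local Notation MV := (mxlmod V n n).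
Local Notation MX := (mxlmod X n n).
Local Notation onm := (@onorm K P n : MV -> K).
Let p_norm : is_norm onm := onorm_is_norm_mxlmod P n.

Definition fs_coords (M : MX) : nat -> MV := fun k => map_mx (fs_val^~ k) M.

Lemma fs_coords_linear : is_linear fs_coords.
Proof. by move=> a M M'; apply/funext => k; apply/matrixP => i j; rewrite !mxE. Qed.

Lemma fs_coords_eq0 (M : MX) : fs_coords M = 0 -> M = 0.
Proof.
move=> M0; apply/matrixP => i j; rewrite mxE; apply/val_inj/funext => k.
by have /matrixP/(_ i j) := congr1 (fun z => z k) M0; rewrite !mxE.
Qed.

Lemma fs_coords_bounded (M : MX) : exists B, forall k, onm (fs_coords M k) <= B.
Proof.
pose N := \max_(ij : 'I_n * 'I_n) fs_supp (M ij.1 ij.2).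
apply: (bounded_of_eventually_bounded (b := 0) (N := N)) => k; first exact: nm_ge0.
move=> Nk; suff -> : fs_coords M k = 0 by rewrite (nm0 p_norm).
apply/matrixP => i j; rewrite !mxE; apply: fs_suppP; apply: leq_trans Nk.
exact: (leq_bigmax_cond (i, j)).
Qed.

Definition fs_onorm : MX -> K := probe_norm onm fs_coords.

Lemma fs_onorm_is_norm : is_norm fs_onorm.
Proof.
apply: (probe_norm_is_norm lubK p_norm fs_coords_linear fs_coords_eq0 fs_coords_bounded).
Qed.

Lemma fs_onorm_ub (M : MX) j : onm (probe (fs_coords M) j) <= fs_onorm M.
Proof. exact: (probe_norm_ub lubK p_norm fs_coords_bounded). Qed.

Lemma fs_onorm_le (M : MX) b :
  (forall j, onm (probe (fs_coords M) j) <= b) -> fs_onorm M <= b.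
Proof. apply: (probe_norm_le lubK p_norm). Qed.

Lemma fs_onorm_gap (M : MX) k :
  onm (fs_coords M k) < onm (fs_coords M 0) -> onm (fs_coords M 0) < fs_onorm M.
Proof. exact: (probe_norm_gap lubK p_norm fs_coords_bounded). Qed.

End Level.

Definition fs_probe j (x : X) : V := probe (fs_val x) j.

Lemma fs_probe_linear j : is_linear (fs_probe j).
Proof. by move=> a x y; apply: probe_linear. Qed.

Lemma probe_fs_coords n (M : mxlmod X n n) j :
  probe (fs_coords M) j = map_mx (fs_probe j) M.
Proof.
by apply/matrixP => i i'; rewrite mxE /fs_probe /probe; case: odd; rewrite ?mxE.
Qed.

Lemma fs_onormE n (M : mxlmod X n n) :
  fs_onorm M = sup_seq (fun j => onorm (map_mx (fs_probe j) M)).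
Proof. by congr sup_seq; apply/funext => j; rewrite probe_fs_coords. Qed.

Lemma fs_onorm_R1 m n (v : 'M[X]_m) (w : 'M[X]_n) :
  fs_onorm (block_mx v 0 0 w) = Num.max (fs_onorm v) (fs_onorm w).
Proof.
have map_block j : map_mx (fs_probe j) (block_mx v 0 0 w) =
    block_mx (map_mx (fs_probe j) v) 0 0 (map_mx (fs_probe j) w).
  rewrite map_block_mx; congr block_mx; apply/matrixP => i i';
  by rewrite !mxE (is_linear0 (fs_probe_linear j)).
rewrite !fs_onormE; under eq_fun do rewrite map_block onorm_R1.
have v_le j : onorm (map_mx (fs_probe j) v) <= fs_onorm v + fs_onorm w.
  rewrite -probe_fs_coords; apply: le_trans (fs_onorm_ub v j) _.
  by rewrite lerDl (nm_ge0 (fs_onorm_is_norm _)).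
have w_le j : onorm (map_mx (fs_probe j) w) <= fs_onorm v + fs_onorm w.
  rewrite -probe_fs_coords; apply: le_trans (fs_onorm_ub w j) _.
  by rewrite lerDr (nm_ge0 (fs_onorm_is_norm _)).
apply: (sup_seq_max lubK _ _ v_le w_le) => j.
  exact: (nm_ge0 (onorm_is_norm_mxlmod _ _)).
exact: (nm_ge0 (onorm_is_norm_mxlmod _ _)).
Qed.

Lemma fs_onorm_R2 m n (al : 'M[K]_(m, n)) (v : 'M[X]_n) (be : 'M[K]_(n, m)) :
  contraction al -> contraction be -> fs_onorm (smx_mul al v be) <= fs_onorm v.
Proof.
move=> al_contr be_contr; apply: fs_onorm_le => j; rewrite probe_fs_coords.
have -> : map_mx (fs_probe j) (smx_mul al v be) =
    smx_mul al (map_mx (fs_probe j) v) be.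
  apply/matrixP => i i'; rewrite !mxE (is_linear_sum (fs_probe_linear j)).
  apply: eq_bigr => k _; rewrite (is_linear_sum (fs_probe_linear j)).
  by apply: eq_bigr => l _; rewrite mxE (is_linearZ (fs_probe_linear j)).
have := onorm_R2 (map_mx (fs_probe j) v) al_contr be_contr.
by move/le_trans; apply; rewrite -probe_fs_coords fs_onorm_ub.
Qed.

Definition fs_ospace : ospace K :=
  OSpace (fun n => fs_onorm_is_norm n) fs_onorm_R1 fs_onorm_R2.

End FinSuppOSpace.

Section FinSuppQuotient.
Variables (K : numFieldType) (lubK : nonneg_lub_property K) (P : ospace K).
Local Notation V := (ocar P).
Local Notation X := (fs_ospace lubK P).

Definition fs_head (x : fsseq V) : V := fs_val x 0%N.

Lemma fs_const_linear k : is_linear (fun y : V => fs_const y k).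
Proof. by move=> a y y'; apply: val_inj; apply: const_upto_linear. Qed.

Lemma fs_onorm_const n k (N : 'M[V]_n) :
  fs_onorm (map_mx (fun y => fs_const y k) N) <= (1 + k.+1%:R^-1) * onorm N.
Proof.
apply: (probe_norm_const_upto lubK (onorm_is_norm_mxlmod P n)).
apply/funext => i; apply/matrixP => a b; rewrite !mxE /= /const_upto.
by case: leqP; rewrite ?mxE.
Qed.

Lemma fs_head_hom : ospace_hom (X := X) (Y := P) fs_head.
Proof. by split=> // n M; apply: (fs_onorm_ub lubK M 0). Qed.

Lemma fs_half_hom : ospace_hom (X := X) (Y := X) ( *:%R 2%:R^-1).
Proof.
split=> [|n M]; first exact: is_linear_scale.
exact: (nm_half_le (fs_onorm_is_norm lubK P n)).
Qed.

Lemma fs_half_const_hom :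
  ospace_hom (X := X) (Y := X) (fun x => 2%:R^-1 *: fs_const (fs_head x) 0).
Proof.
split=> [a x y | n M].
  by rewrite [fs_head _]/= fs_const_linear is_linear_scale.
have -> : map_mx (fun x => 2%:R^-1 *: fs_const (fs_head x) 0) M =
    2%:R^-1 *: (map_mx (fun y => fs_const y 0) (fs_coords M 0) : mxlmod _ n n).
  by apply/matrixP => i j; rewrite !mxE.
apply: le_trans (fs_onorm_ub lubK M 0).
rewrite (nmZ (onorm_is_norm_mxlmod X n)) ger0_norm ?invr_ge0 ?ler0n //.
rewrite ler_pdivrMl ?ltr0n //.
by move: (fs_onorm_const 0 (fs_coords M 0)); rewrite invr1 => /le_trans; apply.
Qed.

Lemma fs_const_comp_hom (W : ospace K) (h : fsseq V -> W) :
  ospace_hom (X := X) h -> (forall x, h x = h (fs_const (fs_head x) 0)) ->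
  ospace_hom (X := P) (fun y => h (fs_const y 0)).
Proof.
move=> [h_lin h_le] h_head; split=> [|n N].
  exact: is_linear_comp (fs_const_linear 0) h_lin.
apply: (le_of_forall_le_1Dinv lubK (nm_ge0 (onorm_is_norm_mxlmod P n) N)) => k.
have -> : map_mx (fun y => h (fs_const y 0)) N =
    map_mx h (map_mx (fun y => fs_const y k) N).
  by apply/matrixP => i j; rewrite !mxE [RHS]h_head.
by apply: le_trans (h_le _ _) _; apply: fs_onorm_const.
Qed.

Lemma fs_no_section (k : V -> fsseq V) (y : V) : y != 0 ->
  ospace_hom (Y := X) k -> ~ cancel k fs_head.
Proof.
move=> y_neq0 [_ k_le] kK; pose Y : 'M[V]_1 := const_mx y.
have onorm1 := onorm_is_norm_mxlmod P 1.
have Y_gt0 : 0 < onorm Y.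
  apply: (nm_gt0 onorm1); apply: contra_neq y_neq0 => /matrixP/(_ 0 0).
  by rewrite !mxE.
have kY0 : fs_coords (map_mx k Y) 0 = Y by apply/matrixP => i j; rewrite !mxE -[RHS]kK.
have kYN : fs_coords (map_mx k Y) (fs_supp (k y)) = 0.
  by apply/matrixP => i j; rewrite !mxE fs_suppP.
have := fs_onorm_gap lubK (M := map_mx k Y) (k := fs_supp (k y)).
rewrite kYN kY0 (nm0 onorm1) => /(_ Y_gt0) /lt_le_trans /(_ (k_le 1%N Y)).
by rewrite ltxx.
Qed.

End FinSuppQuotient.

Section Claims.
Variables (K : numFieldType) (lubK : nonneg_lub_property K).

Lemma normed_no_nonzero_regular_projective :
  @no_nonzero_regular_projective K (normed K) (@ncar K) (@normed_hom K).
Proof.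
move=> P [y /eqP y_neq0]; apply: (@split_quotient_not_regular_projective _ _ _ _ _
  (c0_normed lubK P) P (@c0_head K P) (fun y => c0_const y 0)) => //.
- by move=> ? ? f [].
- exact: c0_head_hom.
- exact: c0_half_hom.
- exact: c0_half_const_hom.
- by move=> W h h_hom h_head; apply: c0_const_comp_hom.
- by move=> k k_hom; apply: c0_no_section y_neq0 k_hom.
Qed.

Lemma banach_no_nonzero_regular_projective :
  @no_nonzero_regular_projective K (banach K)
    (fun X : banach K => ncar (bnormed X)) (@banach_hom K).
Proof.
move=> P [y /eqP y_neq0].
pose X := Banach (c0_complete (lubK := lubK) (@bcomplete K P)).
apply: (@split_quotient_not_regular_projective _ _ _ _ _
  X P (@c0_head K (bnormed P)) (fun y => c0_const y 0)) => //.
- by move=> ? ? f [].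
- exact: c0_head_hom.
- exact: c0_half_hom.
- exact: c0_half_const_hom.
- by move=> W h h_hom h_head; apply: c0_const_comp_hom.
- by move=> k k_hom; apply: c0_no_section y_neq0 k_hom.
Qed.

Lemma ospace_no_nonzero_regular_projective :
  @no_nonzero_regular_projective K (ospace K) (@ocar K) (@ospace_hom K).
Proof.
move=> P [y /eqP y_neq0]; apply: (@split_quotient_not_regular_projective _ _ _ _ _
  (fs_ospace lubK P) P (@fs_head K P) (fun y => fs_const y 0)) => //.
- by move=> ? ? f [].
- exact: fs_head_hom.
- exact: fs_half_hom.
- exact: fs_half_const_hom.
- by move=> W h h_hom h_head; apply: fs_const_comp_hom.
- by split=> // n M; rewrite map_mx_id.
- by move=> k k_hom; apply: fs_no_section y_neq0 k_hom.
Qed.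

Lemma claim_of_nonneg_lub : claim K.
Proof.
split; [exact: normed_no_nonzero_regular_projective
  | exact: banach_no_nonzero_regular_projective
  | exact: ospace_no_nonzero_regular_projective].
Qed.

End Claims.

Theorem proposition1p7 (R : realType) : claim R /\ claim R[i].
Proof.
split; apply: claim_of_nonneg_lub.
  exact: real_nonneg_lub.
exact: complex_nonneg_lub.
Qed.
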